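(* Let $\lambda\in\mathcal P_\epsilon(N)$ and let $\mathbf i$ be an admissible sequence for $\lambda$. Then $\Delta(\lambda^{\mathbf i})\subseteq\Delta(\lambda)$. Moreover, if $\lambda$ is non-singular then $\lambda^{\mathbf i}$ is non-singular.
   Context: $\mathcal P_\epsilon(N)$ ($\epsilon=\pm1$) is the set of partitions $\lambda=(\lambda_1\ge\dots\ge\lambda_n\ge1)$ of $N$ in which every part $m$ with $\epsilon(-1)^m=1$ occurs with even multiplicity; conventions $\lambda_0=0$, $\lambda_i=0$ for $i>n$. A 2-step of $\lambda$ is a pair $(i,i+1)$, $1\le i<n$, with $\epsilon(-1)^{\lambda_i}=\epsilon(-1)^{\lambda_{i+1}}=-1$, $\lambda_{i-1}\ne\lambda_i$, $\lambda_{i+1}\ne\lambda_{i+2}$; $\Delta(\lambda)$ is the set of 2-steps. A 2-step $(i,i+1)$ is bad if ($i>1$ and $\lambda_{i-1}-\lambda_i$ is even) or $\lambda_{i+1}-\lambda_{i+2}$ is even, good otherwise; $\lambda$ is non-singular if all its 2-steps are good. Kempken–Spaltenstein (KS) algorithm: for $1\le i\le n$, Case 1 occurs at $i$ if $\lambda_i\ge\lambda_{i+1}+2$, and then $\lambda^{(i)}=(\lambda_1-2,\dots,\lambda_i-2,\lambda_{i+1},\dots,\lambda_n)$; Case 2 occurs at $i$ if $(i,i+1)\in\Delta(\lambda)$ and $\lambda_i=\lambda_{i+1}$, and then $\lambda^{(i)}=(\lambda_1-2,\dots,\lambda_{i-1}-2,\lambda_i-1,\lambda_{i+1}-1,\lambda_{i+2},\dots,\lambda_n)$;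 zero parts are discarded and $\lambda^{(i)}\in\mathcal P_\epsilon(N-2i)$. Index $i$ is admissible for $\lambda$ if Case 1 or Case 2 occurs at $i$. A sequence $\mathbf i=(i_1,\dots,i_l)$ is admissible for $\lambda$ if each $i_k$ is admissible for $\lambda^{(i_1,\dots,i_{k-1})}$, where $\lambda^{\emptyset}=\lambda$ and $\lambda^{(i_1,\dots,i_k)}=(\lambda^{(i_1,\dots,i_{k-1})})^{(i_k)}$; write $\lambda^{\mathbf i}=\lambda^{(i_1,\dots,i_l)}$. *)

From mathcomp Require Import all_boot all_order all_algebra.
Set Implicit Arguments. Unset Strict Implicit. Unset Printing Implicit Defensive.
Import GRing.Theory Num.Theory.

(* A partition is a seq nat [:: λ_1; ...; λ_n]. *)

(* λ_i with 1-based index; λ_0 = 0 and λ_i = 0 for i > n. *)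
Definition part (s : seq nat) (i : nat) : nat :=
  if i is i'.+1 then nth 0 s i' else 0.

Definition sgn (eps : int) (m : nat) : int := (eps * (-1) ^+ m)%R.

Definition in_P (eps : int) (N : nat) (s : seq nat) : Prop :=
  [/\ sorted geq s, all (fun m => 0 < m) s, sumn s = N &
      forall m, m \in s -> sgn eps m = 1%R -> ~~ odd (count_mem m s)].

Definition two_step (eps : int) (s : seq nat) (i : nat) : bool :=
  [&& 1 <= i, i < size s,
      sgn eps (part s i) == (-1)%R, sgn eps (part s i.+1) == (-1)%R,
      part s i.-1 != part s i & part s i.+1 != part s i.+2].

Definition bad_step (s : seq nat) (i : nat) : bool :=
  ((1 < i) && ~~ odd (part s i.-1 - part s i)) || ~~ odd (part s i.+1 - part s i.+2).

Definition non_singular (eps : int) (s : seq nat) : Prop :=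
  forall i, two_step eps s i -> ~~ bad_step s i.

Definition case1 (s : seq nat) (i : nat) : bool :=
  (1 <= i <= size s) && (part s i.+1 + 2 <= part s i).

Definition case2 (eps : int) (s : seq nat) (i : nat) : bool :=
  two_step eps s i && (part s i == part s i.+1).

Definition admissible_idx (eps : int) (s : seq nat) (i : nat) : bool :=
  case1 s i || case2 eps s i.

(* λ^(i); meaningful when i is admissible (Case 1 and Case 2 are exclusive). *)
Definition ks_step (eps : int) (s : seq nat) (i : nat) : seq nat :=
  [seq x <- mkseq (fun j =>
      if case1 s i then
        (if j.+1 <= i then part s j.+1 - 2 else part s j.+1)
      else
        (if j.+1 < i then part s j.+1 - 2
         else if j.+1 <= i.+1 then part s j.+1 - 1 else part s j.+1))
      (size s) | x != 0].

Fixpoint admissible (eps : int) (s : seq nat) (ids : seq nat) : bool :=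
    if ids is i :: ids' then admissible_idx eps s i && admissible eps (ks_step eps s i) ids'
  else true.

Definition ks_seq (eps : int) (s : seq nat) (ids : seq nat) : seq nat :=
  foldl (ks_step eps) s ids.

From mathcomp Require Import all_boot all_order all_algebra.
From mathcomp Require Import zify.
Set Implicit Arguments. Unset Strict Implicit.
Import GRing.Theory.

(* One KS step λ ↦ λ^(i) lowers a prefix of the parts by 2, except that in
   Case 2 the equal pair λ_i = λ_{i+1} is lowered by 1 only.  Whether (k,k+1)
   is a 2-step, and whether it is bad, depends only on the parities of λ_k and
   λ_{k+1}, on the parities of the neighbouring differences λ_{k-1} - λ_k and
   λ_{k+1} - λ_{k+2}, and on whether these differences vanish.  We describe
   λ^(i) entrywise ([part_ks_step]) and check that all these local data are
   transported from λ^(i) back to λ: everywhere in Case 1 ([case1_local]), and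
   in Case 2 away from the modified pair ([case2_local]), which no 2-step of
   λ^(i) can approach ([case2_two_step_far]); at the two positions k = i ± 2
   where a difference changes parity, (i,i+1) would already be bad in λ
   ([two_steps_at_distance_two_bad]). *)

Arguments part : simpl never.

Ltac decide_ifs :=
  repeat match goal with |- context[if ?c then _ else _] =>
    first [ rewrite (_ : c = true); last by apply/idP; lia
          | rewrite (_ : c = false); last by apply/negbTE; lia ] end.

Definition shape (s : seq nat) : bool := sorted geq s && all (fun m => 0 < m) s.

Lemma shape_of_in_P eps N s : in_P eps N s -> shape s.
Proof. by case=> Hsorted Hpos _ _; rewrite /shape Hsorted Hpos. Qed.

Section ShapeParts.

Variable s : seq nat.
Hypothesis Hs : shape s.

Lemma part_pos j : 0 < j <= size s -> 0 < part s j.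
Proof.
case: j => [|j] // /andP[_ Hj]; case/andP: Hs => _ /allP; apply.
exact: mem_nth.
Qed.

Lemma part_decr j : 0 < j -> part s j.+1 <= part s j.
Proof.
case: j => [|j] // _; rewrite /part.
case: (ltnP j.+1 (size s)) => Hj; last by rewrite (nth_default 0 Hj).
by case/andP: Hs => /(sortedP 0) /(_ j Hj).
Qed.

Lemma part_monotone a b : 0 < a <= b -> part s b <= part s a.
Proof.
case/andP=> Ha; elim: b => [|b IH] Hab; first by rewrite leqn0 in Hab; rewrite (eqP Hab).
move: Hab; rewrite leq_eqVlt => /orP[/eqP-> //|Hlt].
exact: leq_trans (part_decr (leq_trans Ha Hlt)) (IH Hlt).
Qed.

End ShapeParts.

(* In a nonincreasing sequence the zero entries come last, so dropping them
   does not change any entry read with default 0. *)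
Lemma nth_filter_nonzero (u : seq nat) k :
  sorted geq u -> nth 0 [seq x <- u | x != 0] k = nth 0 u k.
Proof.
elim: u k => [|x u IH] k Hsorted //=.
have Hu : sorted geq u := path_sorted Hsorted.
have [Ex|Nx] := eqVneq x 0; last by case: k => //= k; exact: IH.
have /all_pred1P Hzero : all (pred1 0) u.
  apply/allP => y Hy; rewrite /= eqn_leq leq0n andbT.
  by rewrite Ex in Hsorted; have /allP/(_ y Hy) := order_path_min (rev_trans leq_trans) Hsorted.
rewrite Hzero filter_nseq Ex /= nth_nil.
by case: k => //= k; rewrite nth_nseq if_same.
Qed.

Lemma sgn_parity eps m n : odd m = odd n -> sgn eps m = sgn eps n.
Proof. by move=> Hmn; rewrite /sgn -signr_odd Hmn signr_odd. Qed.

Lemma sgn_flip eps m n : odd m != odd n -> sgn eps m = (- sgn eps n)%R.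
Proof.
rewrite /sgn -signr_odd -[in RHS]signr_odd.
by case: (odd m); case: (odd n); rewrite //= ?expr1 ?expr0 ?mulrN1 ?mulr1 ?opprK.
Qed.

Lemma sgn_neg_parity eps m n :
  sgn eps m = (-1)%R -> sgn eps n = (-1)%R -> odd m = odd n.
Proof.
move=> Hm Hn; apply/eqP; apply: contraTT isT => /sgn_flip Hflip.
by move: (Hflip eps); rewrite Hm Hn opprK.
Qed.

Lemma two_step_transfer eps s t k : shape s -> size t <= size s ->
  odd (part t k) = odd (part s k) -> odd (part t k.+1) = odd (part s k.+1) ->
  (1 < k -> part s k.-1 = part s k -> part t k.-1 = part t k) ->
  (part s k.+1 = part s k.+2 -> part t k.+1 = part t k.+2) ->
  two_step eps t k -> two_step eps s k.
Proof.
move=> Hs Hsize Hodd0 Hodd1 Heq0 Heq1.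
case/andP=> Hk /and5P[Hkt Hsg0 Hsg1 Hne0 Hne1].
rewrite /two_step Hk (leq_trans Hkt Hsize) -(sgn_parity eps Hodd0).
rewrite -(sgn_parity eps Hodd1) Hsg0 Hsg1 /=; apply/andP; split.
  have [Hk1|Hk1] := ltnP 1 k; first by apply: contra_neq Hne0; exact: Heq0.
  have -> : k = 1 by apply/eqP; rewrite eqn_leq Hk1 Hk.
  by rewrite /= eq_sym -lt0n part_pos //; lia.
exact: contra_neq Hne1.
Qed.

Lemma bad_step_transfer s t k :
  (1 < k -> odd (part t k.-1 - part t k) = odd (part s k.-1 - part s k)) ->
  odd (part t k.+1 - part t k.+2) = odd (part s k.+1 - part s k.+2) ->
  bad_step t k = bad_step s k.
Proof.
move=> Hodd0 Hodd1; rewrite /bad_step Hodd1.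
by have [/Hodd0 ->|] := ltnP 1 k.
Qed.

(* Two 2-steps at distance 2 force an even gap between them, so the first
   one is bad. *)
Lemma two_steps_at_distance_two_bad eps s i k :
  two_step eps s i -> two_step eps s k -> k = i.+2 \/ k.+2 = i -> bad_step s i.
Proof.
case/andP=> Hi /and5P[_ /eqP Hsi /eqP Hsi1 _ _].
case/andP=> _ /and5P[_ /eqP Hsk /eqP Hsk1 _ _].
rewrite /bad_step; case=> Ek; subst.
  by have Hpar := sgn_neg_parity Hsi1 Hsk; apply/orP; right; lia.
by have Hpar := sgn_neg_parity Hsk1 Hsi; apply/orP; left; rewrite /=; lia.
Qed.

Definition ks_entry (s : seq nat) (i j : nat) : nat :=
  if case1 s i then
    (if j <= i then part s j - 2 else part s j)
  else
    (if j < i then part s j - 2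
     else if j <= i.+1 then part s j - 1 else part s j).

Section OneStep.

Variables (eps : int) (s : seq nat) (i : nat).
Hypotheses (Hs : shape s) (Hadm : admissible_idx eps s i).

Lemma case2_not_case1 : case2 eps s i -> ~~ case1 s i.
Proof. by case/andP=> _ /eqP Heq; apply/negP => /andP[_]; lia. Qed.

Lemma case2_gaps : case2 eps s i ->
  [/\ 0 < i < size s, part s i = part s i.+1, part s i.+2 < part s i.+1
    & 1 < i -> part s i < part s i.-1].
Proof.
case/andP=> /and5P[Hi1 Hi2 _ _ /andP[Hlo Hhi]] /eqP Heq.
have Hdec := part_decr Hs.
split=> //; first by rewrite Hi1.
  by rewrite ltn_neqAle eq_sym Hhi Hdec.
move=> Hi; rewrite ltn_neqAle eq_sym Hlo /=.
by have := Hdec i.-1; rewrite prednK //; apply; rewrite -ltnS prednK.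
Qed.

Lemma ks_entry_decr j : 0 < j -> ks_entry s i j.+1 <= ks_entry s i j.
Proof.
move=> Hj; have Hdec := part_decr Hs Hj; rewrite /ks_entry.
case: (boolP (case1 s i)) => [/andP[_ Hgap]|Hc1].
  have Hpos : j < i \/ j = i \/ i < j by lia.
  by case: Hpos => [Hlt|[->|Hgt]]; decide_ifs; lia.
have Hc2 : case2 eps s i by move: Hadm; rewrite /admissible_idx (negbTE Hc1).
have [/andP[Hi0 _] Heq Hhi Hlo] := case2_gaps Hc2.
have Hpos : j.+1 < i \/ j.+1 = i \/ j = i \/ j = i.+1 \/ i.+1 < j by lia.
case: Hpos => [Hlt|[Ej|[->|[->|Hgt]]]]; decide_ifs; try lia.
by subst i; have /= := Hlo Hj; lia.
Qed.

Lemma sorted_ks_entries : sorted geq (mkseq (fun j => ks_entry s i j.+1) (size s)).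
Proof.
apply/(sortedP 0) => k; rewrite size_mkseq => Hk.
by rewrite !nth_mkseq ?(ltnW Hk) //; apply: ks_entry_decr.
Qed.

(* Reading λ^(i) entrywise: the discarded parts are the trailing zeros. *)
Lemma part_ks_step j : part (ks_step eps s i) j = ks_entry s i j.
Proof.
set u := mkseq (fun j => ks_entry s i j.+1) (size s).
have -> : ks_step eps s i = [seq x <- u | x != 0] by [].
case: j => [|j]; first by rewrite /ks_entry; repeat case: ifP.
rewrite /part nth_filter_nonzero ?sorted_ks_entries // /u.
have [Hj|Hj] := ltnP j (size s); first by rewrite nth_mkseq.
have Hzero : part s j.+1 = 0 by rewrite /part nth_default.
by rewrite nth_default ?size_mkseq // /ks_entry Hzero; repeat case: ifP.
Qed.

Lemma size_ks_step : size (ks_step eps s i) <= size s.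
Proof. by rewrite size_filter (leq_trans (count_size _ _)) // size_mkseq. Qed.

Lemma shape_ks_step : shape (ks_step eps s i).
Proof.
apply/andP; split; last by apply/allP => x; rewrite mem_filter lt0n => /andP[].
exact: (sorted_filter (rev_trans leq_trans)) sorted_ks_entries.
Qed.

Local Notation t := (ks_step eps s i).

(* Case 1 subtracts 2 from λ_1..λ_i: parities of parts and of consecutive
   differences are kept, and equal neighbours stay equal. *)
Lemma case1_local j : case1 s i -> 0 < j ->
  [/\ odd (part t j) = odd (part s j),
      odd (part t j - part t j.+1) = odd (part s j - part s j.+1)
    & part s j = part s j.+1 -> part t j = part t j.+1].
Proof.
move=> Hc1 Hj; rewrite !part_ks_step /ks_entry Hc1.
have /andP[_ Hgap] := Hc1; have Hdec := part_decr Hs Hj.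
have Hpos : j < i \/ j = i \/ i < j by lia.
case: Hpos => [Hlt|[->|Hgt]]; decide_ifs; last by [].
  have Hmono : part s i <= part s j.+1 by apply: part_monotone; lia.
  by split; lia.
by split; lia.
Qed.

(* Case 2 subtracts 2 from λ_1..λ_{i-1} and 1 from λ_i, λ_{i+1}: parities
   of parts away from i, i+1 and of differences away from (i-1,i), (i+1,i+2)
   are kept, and equal neighbours stay equal. *)
Lemma case2_local j : case2 eps s i -> 0 < j ->
  [/\ j < i \/ i.+1 < j -> odd (part t j) = odd (part s j),
      j.+1 != i -> j != i.+1 ->
        odd (part t j - part t j.+1) = odd (part s j - part s j.+1)
    & part s j = part s j.+1 -> part t j = part t j.+1].
Proof.
move=> Hc2 Hj; have [/andP[Hi0 Hisz] Heq Hhi Hlo] := case2_gaps Hc2.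
have Hdec := part_decr Hs Hj.
have Hpi : 0 < part s i by apply: part_pos; lia.
rewrite !part_ks_step /ks_entry.
rewrite (negbTE (case2_not_case1 Hc2)).
have Hpos : j.+1 < i \/ j.+1 = i \/ j = i \/ j = i.+1 \/ i.+1 < j by lia.
case: Hpos => [Hlt|[Ej|[->|[->|Hgt]]]]; decide_ifs.
- have Hlo' := Hlo ltac:(lia).
  have Hmono : part s i.-1 <= part s j.+1 by apply: part_monotone; lia.
  by split; lia.
- by subst i; have /= := Hlo Hj; split; lia.
- by split; lia.
- by split; lia.
- by [].
Qed.

Lemma case2_at_step : case2 eps s i ->
  odd (part t i) != odd (part s i) /\ part t i = part t i.+1.
Proof.
move=> Hc2; have [/andP[Hi0 Hisz] Heq _ _] := case2_gaps Hc2.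
have Hpi : 0 < part s i by apply: part_pos; lia.
rewrite !part_ks_step /ks_entry.
rewrite (negbTE (case2_not_case1 Hc2)).
by decide_ifs; split; lia.
Qed.

Lemma case2_two_step_far k : case2 eps s i -> two_step eps t k ->
  k.+1 < i \/ i.+1 < k.
Proof.
move=> Hc2 Ht; have [Hflip Heq] := case2_at_step Hc2.
have /andP[/and5P[_ _ /eqP Hsi _ _] _] := Hc2.
case/andP: Ht => Hk /and5P[_ /eqP Hsk _ Hne0 Hne1].
have Hpos : k.+1 < i \/ k.+1 = i \/ k = i \/ k = i.+1 \/ i.+1 < k by lia.
case: Hpos => [|[Ek|[Ek|[Ek|]]]]; [by left | | | | by right]; subst.
- by rewrite Heq eqxx in Hne1.
- by rewrite (sgn_neg_parity Hsk Hsi) eqxx in Hflip.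
- by rewrite /= Heq eqxx in Hne0.
Qed.

Lemma ks_step_two_step k : two_step eps t k -> two_step eps s k.
Proof.
move=> Ht; have Hk : 0 < k by case/andP: Ht.
case/orP: Hadm => [Hc1|Hc2].
  have [Hodd0 _ _] := case1_local Hc1 Hk.
  have [Hodd1 _ Heq1] := case1_local Hc1 (ltn0Sn k).
  apply: (two_step_transfer Hs size_ks_step Hodd0 Hodd1 _ Heq1 Ht) => Hk1.
  have Hpk : 0 < k.-1 by lia.
  by have [_ _] := case1_local Hc1 Hpk; rewrite prednK.
have Hfar := case2_two_step_far Hc2 Ht.
have [Hodd0 _ _] := case2_local Hc2 Hk.
have [Hodd1 _ Heq1] := case2_local Hc2 (ltn0Sn k).
apply: (two_step_transfer Hs size_ks_step (Hodd0 _) (Hodd1 _) _ Heq1 Ht); try lia.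
move=> Hk1; have Hpk : 0 < k.-1 by lia.
by have [_ _] := case2_local Hc2 Hpk; rewrite prednK.
Qed.

Lemma ks_step_good k : non_singular eps s -> two_step eps t k -> ~~ bad_step t k.
Proof.
move=> Hns Ht; have Hk : 0 < k by case/andP: Ht.
have Hts := ks_step_two_step Ht.
suff -> : bad_step t k = bad_step s k by exact: Hns.
case/orP: Hadm => [Hc1|Hc2].
  apply: bad_step_transfer; last by have [] := case1_local Hc1 (ltn0Sn k).
  move=> Hk1; have Hpk : 0 < k.-1 by lia.
  by have [] := case1_local Hc1 Hpk; rewrite prednK.
have Hfar := case2_two_step_far Hc2 Ht.
have Hts_i : two_step eps s i by case/andP: Hc2.
have [Edist|Hdist] : (k = i.+2 \/ k.+2 = i) \/ (k != i.+2) && (k.+2 != i) by lia.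
  by move: (Hns i Hts_i); rewrite (two_steps_at_distance_two_bad Hts_i Hts Edist).
apply: bad_step_transfer.
  move=> Hk1; have Hpk : 0 < k.-1 by lia.
  have [_ Hodd _] := case2_local Hc2 Hpk.
  by rewrite prednK in Hodd; [apply: Hodd | ..]; lia.
by have [_ Hodd _] := case2_local Hc2 (ltn0Sn k); apply: Hodd; lia.
Qed.

End OneStep.

Lemma ks_seq_two_steps eps s ids : shape s -> admissible eps s ids ->
  (forall k, two_step eps (ks_seq eps s ids) k -> two_step eps s k) /\
  (non_singular eps s -> non_singular eps (ks_seq eps s ids)).
Proof.
elim: ids s => [|i ids IH] s Hs //= /andP[Hi Hids].
have [IHsub IHgood] := IH _ (shape_ks_step Hs Hi) Hids.
split=> [k /IHsub /(ks_step_two_step Hs Hi) //|Hns].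
by apply: IHgood => k; apply: (ks_step_good Hs Hi).
Qed.

Theorem mainTheorem9 (eps : int) (N : nat) (lam : seq nat) (ids : seq nat) :
  (eps = 1%R \/ eps = (-1)%R) ->
  in_P eps N lam ->
  admissible eps lam ids ->
  (forall i, two_step eps (ks_seq eps lam ids) i -> two_step eps lam i) /\
  (non_singular eps lam -> non_singular eps (ks_seq eps lam ids)).
Proof. by move=> _ /shape_of_in_P; apply: ks_seq_two_steps. Qed.
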